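(* Let $\mathcal{A}$ be a finite alphabet equipped with a total order $<$, extended to the lexicographic order on infinite words, and let $a \in \mathcal{A}$. Suppose $\mathbf{t}, \mathbf{s}, \mathbf{t}^{(1)}, \mathbf{s}^{(1)} \in \mathcal{A}^{\omega}$ are infinite words such that $\mathbf{t} = \Psi_z(\mathbf{t}^{(1)})$ and $\mathbf{s} = \Psi_z(\mathbf{s}^{(1)})$ for some letter $z$ that occurs in $\mathbf{t}^{(1)}$. Then \[ \min(\mathbf{t}^{(1)}) = a\mathbf{s}^{(1)} \iff \min(\mathbf{t}) = a\mathbf{s}. \]
   Context: For a letter $z \in \mathcal{A}$, $\Psi_z$ is the morphism of $\mathcal{A}^*$ defined by $\Psi_z(z) = z$ and $\Psi_z(y) = zy$ for every letter $y \neq z$; it extends letterwise to infinite words. Lexicographic order on words: $u < v$ iff $u$ is a proper prefix of $v$, or $u = xbu'$, $v = xcv'$ with letters $b < c$; for infinite words $\mathbf{u} < \mathbf{v}$ iff they first differ at some position where $\mathbf{u}$ has the smaller letter. For an infinite word $\mathbf{w}$ and $k \ge 1$, let $\min(\mathbf{w}\,|\,k)$ denote the lexicographically smallest factor (contiguous block) of $\mathbf{w}$ of length $k$; these are prefixes of one another, and $\min(\mathbf{w})$ is the infinite word $\lim_{k\to\infty} \min(\mathbf{w}\,|\,k)$. *)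

From HB Require Import structures.
From mathcomp Require Import all_boot all_order.
Set Implicit Arguments. Unset Strict Implicit. Unset Printing Implicit Defensive.
Import Order.TTheory.
Local Open Scope order_scope.

Section Words.
Context {d : Order.disp_t} {A : finOrderType d}.

Definition iword := nat -> A.

Fixpoint lexle (u v : seq A) : bool :=
  match u, v with
  | [::], _ => true
  | _ :: _, [::] => false
  | x :: u', y :: v' => (x < y) || ((x == y) && lexle u' v')
  end.

Definition wprefix (w : iword) (k : nat) : seq A := [seq w j | j <- iota 0 k].

Definition wfactor (w : iword) (i k : nat) : seq A := [seq w (i + j) | j <- iota 0 k].

Definition is_min_factor (w : iword) (k : nat) (u : seq A) : Prop :=
  (exists i, u = wfactor w i k) /\ (forall i, lexle u (wfactor w i k)).

(* m = min(w) = lim_k min(w | k): every length-k prefix of m is min(w | k). *)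
Definition is_min_word (w m : iword) : Prop :=
  forall k, is_min_factor w k (wprefix m k).

Definition wcons (a : A) (s : iword) : iword :=
  fun n => if n is n'.+1 then s n' else a.

Definition psi (z y : A) : seq A := if y == z then [:: z] else [:: z; y].

(* Letterwise extension to infinite words: Psi_z(w) = Psi_z(w_0) Psi_z(w_1) ...
   Since each image is nonempty, the first n+1 letters of w determine the
   letter at position n of the image. *)
Definition psiw (z : A) (w : iword) : iword :=
  fun n => nth z (flatten [seq psi z (w i) | i <- iota 0 n.+1]) n.

End Words.

(** Write [phiw z (x u) = x Ψ_z(u)], so that [a s = phiw z (a s1)] and
    [Ψ_z(x u)] is [phiw z (x u)] or [z phiw z (x u)] according as [x = z] or
    not.  The suffixes of [Ψ_z(w)] are then exactly the words [Ψ_z(w')] and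
    [phiw z w'] for the suffixes [w'] of [w].  Since [Ψ_z] and [phiw z] are
    order embeddings that preserve and (up to doubling the length) reflect
    common prefixes, the minimal-suffix conditions transfer both ways; the
    only mixed comparison, between [phiw z m] and [Ψ_z(w')], is settled by
    [m 0 <= z], which holds because [z] occurs in [w]. *)

From mathcomp Require Import all_boot all_order.
From Stdlib Require Import FunctionalExtensionality.
Set Implicit Arguments. Unset Strict Implicit. Unset Printing Implicit Defensive.
Import Order.TTheory.

Section InfiniteWords.
Context {d : Order.disp_t} {A : finOrderType d}.
Implicit Types (u v w m : nat -> A) (x : A).

Definition sh i w : nat -> A := fun n => w (i + n).

Definition agree k u v := forall n, n < k -> u n = v n.

Definition wle u v := forall k, lexle (wprefix u k) (wprefix v k).

Lemma sh_head i w : sh i w 0 = w i.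
Proof. by rewrite /sh addn0. Qed.

Lemma sh_sh i j w : sh j (sh i w) = sh (i + j) w.
Proof. by apply: functional_extensionality => n; rewrite /sh addnA. Qed.

Lemma wprefixS w k : wprefix w k.+1 = w 0 :: wprefix (sh 1 w) k.
Proof. by rewrite /wprefix /= -[in LHS](addn0 1) iotaDl -map_comp. Qed.

Lemma wleE u v :
  wle u v <-> (u 0 < v 0)%O \/ u 0 = v 0 /\ wle (sh 1 u) (sh 1 v).
Proof.
split=> [le_uv | cmp_uv [|k] //].
- have := le_uv 1; rewrite !wprefixS /= andbT => /orP[-> | /eqP eq_uv]; first by left.
  right; split=> // k; have := le_uv k.+1.
  by rewrite !wprefixS /= eq_uv ltxx eqxx.
- rewrite !wprefixS /=; case: cmp_uv => [-> // | [-> le_uv]].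
  by rewrite ltxx eqxx le_uv.
Qed.

Lemma wle_head u v : wle u v -> (u 0 <= v 0)%O.
Proof. case/wleE => [/ltW // | [-> _]]; exact: lexx. Qed.

Lemma agree_wprefix k u v : wprefix u k = wprefix v k <-> agree k u v.
Proof.
split=> [eq_uv n lt_nk | agr_uv].
- have := congr1 (nth (u 0) ^~ n) eq_uv.
  by rewrite /wprefix !(nth_map 0) ?size_iota // nth_iota.
- apply/eq_in_map => n; rewrite mem_iota => /andP[_]; exact: agr_uv.
Qed.

Lemma agreeE k u v :
  agree k.+1 u v <-> u 0 = v 0 /\ agree k (sh 1 u) (sh 1 v).
Proof.
split=> [agr_uv | [eq_uv agr_uv] [|n] lt_nk //]; last exact: agr_uv.
by split=> [|n lt_nk]; apply: agr_uv.
Qed.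

Lemma agree_leq k l u v : k <= l -> agree l u v -> agree k u v.
Proof. by move=> le_kl agr_uv n lt_nk; apply/agr_uv/(leq_trans lt_nk). Qed.

Lemma min_wordP w m : is_min_word w m <->
  (forall k, exists i, agree k m (sh i w)) /\ (forall i, wle m (sh i w)).
Proof.
split=> [min_m | [occ_m le_m] k]; last first.
  by split=> [|i]; [have [i /agree_wprefix] := occ_m k; exists i | exact: le_m].
split=> [k | i k]; last exact: (proj2 (min_m k)).
by have [[i /agree_wprefix]] := min_m k; exists i.
Qed.

Section Psi.
Variable z : A.

Definition phiw w : nat -> A := wcons (w 0) (psiw z (sh 1 w)).

Lemma phiw_wcons x u : phiw (wcons x u) = wcons x (psiw z u).
Proof. by []. Qed.

Lemma sh1_phiw w : sh 1 (phiw w) = psiw z (sh 1 w).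
Proof. by []. Qed.

Lemma size_flatten_psi (f : nat -> A) (l : seq nat) :
  size l <= size (flatten [seq psi z (f i) | i <- l]).
Proof.
elim: l => //= i l IHl; rewrite size_cat /psi.
by case: (f i == z); rewrite /= ?add1n ?add2n ltnS // (leq_trans IHl).
Qed.

Lemma psiwE w n l : n < l ->
  psiw z w n = nth z (flatten [seq psi z (w i) | i <- iota 0 l]) n.
Proof.
move=> lt_nl; rewrite /psiw -(subnKC lt_nl) iotaD map_cat flatten_cat nth_cat.
by have := size_flatten_psi w (iota 0 n.+1); rewrite size_iota => ->.
Qed.

Lemma psiw_cons w : psiw z w = if w 0 == z then phiw w else wcons z (phiw w).
Proof.
apply: functional_extensionality => n.
have flattenS k : flatten [seq psi z (w i) | i <- iota 0 k.+1] =
    psi z (w 0) ++ flatten [seq psi z (sh 1 w i) | i <- iota 0 k].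
  by rewrite /= -[in LHS](addn0 1) iotaDl -map_comp.
rewrite {1}/psiw flattenS {1}/psi /phiw.
case: eqP => [-> | _]; case: n => [|[|n]] //.
by rewrite -[RHS]/(psiw z (sh 1 w) n) (psiwE _ (leqW (ltnSn n))).
Qed.

Lemma psiw_phiw w : w 0 = z -> psiw z w = phiw w.
Proof. by move=> w0z; rewrite psiw_cons w0z eqxx. Qed.

Lemma psiw_head w : psiw z w 0 = z.
Proof. by rewrite psiw_cons; case: eqP. Qed.

Lemma sh1_psiw w :
  sh 1 (psiw z w) = if w 0 == z then psiw z (sh 1 w) else phiw w.
Proof. by rewrite [in LHS]psiw_cons; case: ifP. Qed.

Lemma psiw_second w : sh 1 (psiw z w) 0 = w 0.
Proof. by rewrite sh1_psiw; case: eqP => [-> | //]; apply: psiw_head. Qed.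

Lemma psiw_sh_psiw w i : exists j, sh j (psiw z w) = psiw z (sh i w).
Proof.
elim: i => [|i [j eq_j]]; first by exists 0; rewrite /sh; congr psiw.
have := sh1_psiw (sh i w); rewrite -eq_j !sh_sh !addn1.
case: ifP => _ eq_sh; first by exists j.+1.
by exists j.+2; rewrite -[j.+2]addn1 -sh_sh eq_sh sh1_phiw sh_sh addn1.
Qed.

Lemma psiw_sh_phiw w i : exists j, sh j (psiw z w) = phiw (sh i w).
Proof.
have [j eq_j] := psiw_sh_psiw w i; case: (eqVneq (sh i w 0) z) => [w_iz | w_iNz].
  by exists j; rewrite eq_j psiw_phiw.
by exists j.+1; rewrite -addn1 -sh_sh eq_j sh1_psiw (negbTE w_iNz).
Qed.

Lemma psiw_sh_inv w j : exists i,
  sh j (psiw z w) = psiw z (sh i w) \/ sh j (psiw z w) = phiw (sh i w).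
Proof.
elim: j => [|j [i [eq_j | eq_j]]]; first by exists 0; left; rewrite /sh; congr psiw.
  have := sh1_psiw (sh i w); rewrite -eq_j !sh_sh !addn1.
  by case: ifP => _ ->; [exists i.+1; left | exists i; right].
by exists i.+1; left; rewrite -[j.+1]addn1 -sh_sh eq_j sh1_phiw sh_sh addn1.
Qed.

Lemma lexle_wprefix_wcons x u v k :
  lexle (wprefix (wcons x u) k.+1) (wprefix (wcons x v) k.+1) =
  lexle (wprefix u k) (wprefix v k).
Proof. by rewrite !wprefixS /= ltxx eqxx. Qed.

Lemma psiw_homo : {homo psiw z : u v / wle u v}.
Proof.
move=> u v le_uv k; elim/ltn_ind: k u v le_uv => k IHk u v.
case/wleE => [lt_uv | [eq_uv le_uv]].
  case: k {IHk} => [|[|k]] //.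
    by rewrite !wprefixS !psiw_head /= ltxx eqxx.
  by rewrite !wprefixS !psiw_head !psiw_second /= ltxx eqxx lt_uv.
rewrite !psiw_cons /phiw -eq_uv; case: ifP => _.
  by case: k IHk => [|k] IHk //; rewrite lexle_wprefix_wcons; apply: IHk.
by case: k IHk => [|[|k]] IHk //; rewrite !lexle_wprefix_wcons //; apply: IHk.
Qed.

Lemma wle_psiwP u v : wle (psiw z u) (psiw z v) <-> wle u v.
Proof.
split=> [le_psi k | /psiw_homo //]; elim: k u v le_psi => [//|k IHk] u v.
case/wleE => [|[_ le1]]; first by rewrite !psiw_head ltxx.
have := wle_head le1; rewrite !psiw_second le_eqVlt => /orP[/eqP eq_uv | lt_uv].
  rewrite !wprefixS /= eq_uv ltxx eqxx /=; apply: IHk.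
  rewrite !sh1_psiw /phiw -eq_uv in le1; case: ifP le1 => _ // /wleE[|[_ //]].
  by rewrite ltxx.
by rewrite !wprefixS /= lt_uv.
Qed.

Lemma wle_phiwP u v : wle (phiw u) (phiw v) <-> wle u v.
Proof.
by split=> /wleE[lt_uv | [eq_uv /wle_psiwP le_uv]]; apply/wleE; [left | right | left | right].
Qed.

Lemma agree_psiw k u v : agree k u v -> agree k (psiw z u) (psiw z v).
Proof.
move=> agr_uv n lt_nk; rewrite /psiw; congr (nth _ (flatten _) _).
apply/eq_in_map => i; rewrite mem_iota => /andP[_ lt_in].
by rewrite agr_uv // (leq_trans lt_in lt_nk).
Qed.

Lemma agree_phiw k u v : agree k u v -> agree k (phiw u) (phiw v).
Proof.
case: k => [_ n // | k] /agreeE[eq_uv agr_uv]; apply/agreeE.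
by split=> //; apply: agree_psiw.
Qed.

Lemma agree_psiw_inv k u v : agree k.*2 (psiw z u) (psiw z v) -> agree k u v.
Proof.
elim: k u v => [_ _ _ n // | k IHk] u v; rewrite doubleS => /agreeE[_ agr1].
have := agr1 0 isT; rewrite !psiw_second => eq_uv.
apply/agreeE; split=> //; apply: IHk.
rewrite !sh1_psiw /phiw -eq_uv in agr1; case: ifP agr1 => _.
  exact: agree_leq (leqnSn _).
by case/agreeE.
Qed.

Lemma agree_phiw_inv k u v : agree k.*2 (phiw u) (phiw v) -> agree k u v.
Proof.
case: k => [_ n // | k]; rewrite doubleS => /agreeE[eq_uv agr_uv].
apply/agreeE; split=> //; apply: agree_psiw_inv.
exact: agree_leq (leqnSn _) agr_uv.
Qed.

Lemma phiw_wle_psiw m u : (m 0 <= z)%O -> wle m u -> wle (phiw m) (psiw z u).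
Proof.
rewrite le_eqVlt => /orP[/eqP m0z | lt_m0z] le_mu.
  by rewrite -psiw_phiw //; apply: psiw_homo.
by apply/wleE; left; rewrite psiw_head.
Qed.

Lemma agree_phiw_psiw k m u :
  (m 0 <= z)%O -> agree k.*2 (phiw m) (psiw z u) -> agree k m u.
Proof.
rewrite le_eqVlt => /orP[/eqP m0z | lt_m0z].
  by rewrite -psiw_phiw //; apply: agree_psiw_inv.
case: k => [_ n // | k]; rewrite doubleS => /agreeE[m0z _].
by move: lt_m0z; rewrite [m 0]m0z psiw_head ltxx.
Qed.

Lemma min_word_psiw w m :
  (exists i, w i = z) -> is_min_word w m -> is_min_word (psiw z w) (phiw m).
Proof.
move=> [i0 w_i0] /min_wordP[occ_m le_m]; apply/min_wordP.
have m0z : (m 0 <= z)%O by rewrite -w_i0 -(sh_head i0 w); apply: wle_head.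
split=> [k | j].
  have [i agr_i] := occ_m k; have [j eq_j] := psiw_sh_phiw w i.
  by exists j; rewrite eq_j; apply: agree_phiw.
have [i [-> | ->]] := psiw_sh_inv w j; first exact: phiw_wle_psiw.
exact/wle_phiwP.
Qed.

Lemma min_word_of_psiw w m : is_min_word (psiw z w) (phiw m) -> is_min_word w m.
Proof.
case/min_wordP => occ_m le_m; apply/min_wordP.
have m0z : (m 0 <= z)%O.
  by rewrite -(psiw_head w) -(sh_head 0 (psiw z w)); exact: wle_head (le_m 0).
split=> [k | i].
  have [j agr_j] := occ_m k.*2; have [i [eq_j | eq_j]] := psiw_sh_inv w j.
    by exists i; rewrite eq_j in agr_j; apply: agree_phiw_psiw.
  by exists i; rewrite eq_j in agr_j; apply: agree_phiw_inv.
by have [j eq_j] := psiw_sh_phiw w i; apply/wle_phiwP; rewrite -eq_j.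
Qed.

Lemma min_word_psiwP w m : (exists i, w i = z) ->
  is_min_word w m <-> is_min_word (psiw z w) (phiw m).
Proof. by move=> occ_z; split; [apply: min_word_psiw | apply: min_word_of_psiw]. Qed.

End Psi.
End InfiniteWords.

Theorem mainTheorem1 (d : Order.disp_t) (A : finOrderType d) (a z : A)
  (t s t1 s1 : nat -> A) :
  t = psiw z t1 -> s = psiw z s1 -> (exists i, t1 i = z) ->
  (is_min_word t1 (wcons a s1) <-> is_min_word t (wcons a s)).
Proof. by move=> -> -> occ_z; rewrite -phiw_wcons; apply: min_word_psiwP. Qed.
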